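(* Let $\tau_{\bm{\lambda}}$ be a tableau of shape $\bm{\lambda}\vdash n$. Then $W_{\tau_{\bm{\lambda}}}$ is contained in the span of the polynomials $\textup{sym}_{\textup{hook}(\tau_{\bm{\lambda}})}(\mathsf{x}^m)$, as $\mathsf{x}^m$ ranges over the square-free monomials of degree at most $d$.
   Context: Fix positive integers $n,d$. $\mathbb{R}[\mathsf{x}]$ is the polynomial ring in variables $\mathsf{x}_{ij}$, $1\le i<j\le n$ ($\mathsf{x}_{ji}:=\mathsf{x}_{ij}$). $\mathbb{R}[\mathcal{V}_n]=\mathbb{R}[\mathsf{x}]/\mathcal{I}_n$, with $\mathcal{I}_n$ generated by all $\mathsf{x}_{ij}^2-\mathsf{x}_{ij}$, identified as a vector space with the square-free polynomials; $V=\mathbb{R}[\mathcal{V}_n]_{\le d}$ is the space of square-free polynomials of degree at most $d$. A square-free monomial is $\mathsf{x}^m=\prod_{i<j}\mathsf{x}_{ij}^{m_{ij}}$ with $m_{ij}\in\{0,1\}$. $\mathfrak{S}_n$ acts by ring automorphisms with $\mathfrak{s}\cdot\mathsf{x}_{ij}=\mathsf{x}_{\mathfrak{s}(i)\mathfrak{s}(j)}$. $V=\bigoplus_{\bm{\lambda}}V_{\bm{\lambda}}$ is the isotypic decomposition ($V_{\bm{\lambda}}$ = span of all submodules isomorphic to the irreducible $S_{\bm{\lambda}}$). A tableau of shape $\bm{\lambda}=(\lambda_1,\lambda_2,\dots)$ is a bijective filling of the Young diagram of $\bm{\lambda}$ with $1,\dots,n$; the row group $\mathfrak{R}_\tau$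 of a tableau $\tau$ is the subgroup of $\mathfrak{S}_n$ preserving the label set of each row. $W_{\tau_{\bm{\lambda}}}:=V_{\bm{\lambda}}^{\mathfrak{R}_{\tau_{\bm{\lambda}}}}$, the elements of $V_{\bm{\lambda}}$ fixed by $\mathfrak{R}_{\tau_{\bm{\lambda}}}$. For a tableau $\tau$, $\textup{sym}_\tau(\mathsf{f}):=\frac1{|\mathfrak{R}_\tau|}\sum_{\mathfrak{s}\in\mathfrak{R}_\tau}\mathfrak{s}\cdot\mathsf{f}$. $\textup{hook}(\tau_{\bm{\lambda}})$ is the tableau of hook shape $(\lambda_1,1^{n-\lambda_1})$ whose first row equals the first row of $\tau_{\bm{\lambda}}$ and whose remaining labels are placed in the tail (first column below the first row) in increasing order. *)

From HB Require Import structures.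
From mathcomp Require Import all_boot all_order all_algebra all_fingroup.
From mathcomp Require Import reals.
Set Implicit Arguments. Unset Strict Implicit. Unset Printing Implicit Defensive.
Import GRing.Theory.
Local Open Scope ring_scope.

Definition is_partition (n : nat) (lam : seq nat) : bool :=
  [&& sorted geq lam, all (fun k => 0 < k)%N lam & sumn lam == n].

(* A tableau is a filling of the Young diagram by the labels 'I_n,
   given as the map label |-> (row, column) (0-indexed).  It is a tableau of
   shape [lam] iff this map is injective with image inside the diagram of
   [lam]; since the diagram has exactly n cells when lam |- n, the filling is
   then bijective. *)
Definition tableau n := {ffun 'I_n -> nat * nat}.

Definition is_tableau n (lam : seq nat) (t : tableau n) : Prop :=
  injective t /\ forall x, ((t x).2 < nth 0%N lam (t x).1)%N.

Definition row_group n (t : tableau n) : {set {perm 'I_n}} :=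
  [set s : {perm 'I_n} | [forall x, (t (s x)).1 == (t x).1]].
Definition col_group n (t : tableau n) : {set {perm 'I_n}} :=
  [set s : {perm 'I_n} | [forall x, (t (s x)).2 == (t x).2]].

(* hook(t): first row equal to the first row of t, remaining labels placed in
   increasing order in the first column below the first row. *)
Definition hook n (t : tableau n) : tableau n :=
  [ffun x => if (t x).1 == 0%N then (0%N, (t x).2)
             else (#|[set y | ((t y).1 != 0%N) && (y < x)%N]|.+1, 0%N)].

(* A variable x_ij (i<j) is the 2-element set {i,j}; a square-free monomial
   x^m is a set of variables.  Polynomials are coefficient functions on
   sets of subsets of 'I_n; elements of R[V_n] are those supported on genuine
   square-free monomials (all members of size 2). *)
Definition mono n := {set {set 'I_n}}.
Definition sqpoly (R : nzRingType) n := {ffun mono n -> R^o}.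

Definition sqfree_mono n (m : mono n) : bool := [forall A in m, #|A| == 2].

Definition inV (R : nzRingType) n (d : nat) (f : sqpoly R n) : Prop :=
  forall m, f m != 0 -> sqfree_mono m && (#|m| <= d)%N.

Definition xmono (R : nzRingType) n (m : mono n) : sqpoly R n :=
  [ffun m' => (m' == m)%:R].

Definition mono_act n (s : {perm 'I_n}) (m : mono n) : mono n :=
  [set s @: (A : {set 'I_n}) | A in m].
Definition pact (R : nzRingType) n (s : {perm 'I_n}) (f : sqpoly R n) : sqpoly R n :=
  [ffun m => f (mono_act s^-1 m)].

Definition sym (R : fieldType) n (t : tableau n) (f : sqpoly R n) : sqpoly R n :=
  (#|row_group t|%:R)^-1 *: \sum_(s in row_group t) pact s f.

(* A tabloid is recorded by its row assignment label |-> row index. *)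
Definition rowfun n := {ffun 'I_n -> 'I_n.+1}.
Definition tabspace (R : nzRingType) n := {ffun rowfun n -> R^o}.

Definition tabloid n (t : tableau n) : rowfun n := [ffun x => inord (t x).1].

Definition delta_tab (R : nzRingType) n (r : rowfun n) : tabspace R n :=
  [ffun r' => (r' == r)%:R].

(* permutation action on tabloids: s . {t} = {s t} (relabel i by s(i)) *)
Definition tact (R : nzRingType) n (s : {perm 'I_n}) (F : tabspace R n)
  : tabspace R n := [ffun r : rowfun n => F [ffun x => r (s x)]].

Definition polytabloid (R : nzRingType) n (t : tableau n) : tabspace R n :=
  \sum_(c in col_group t) ((-1) ^+ odd_perm c) *: tact c (delta_tab R (tabloid t)).

(* Specht module S^t = span of the polytabloids e_{s t} = s . e_t *)
Definition in_specht (R : nzRingType) n (t : tableau n) (F : tabspace R n) : Prop :=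
  exists a : {perm 'I_n} -> R,
    F = \sum_(s : {perm 'I_n}) a s *: tact s (polytabloid R t).

(* [phi] is linear, and restricted to the Specht module S^t it is an injective
   S_n-equivariant map into V; its image is thus a submodule of V isomorphic
   to S^t, and every such submodule arises this way. *)
Definition specht_embedding (R : nzRingType) n d (t : tableau n)
  (phi : tabspace R n -> sqpoly R n) : Prop :=
  [/\ forall (a : R) (F G : tabspace R n), phi (a *: F + G) = a *: phi F + phi G,
      forall F, in_specht t F -> inV d (phi F),
      forall F, in_specht t F -> phi F = 0 -> F = 0 &
      forall s F, in_specht t F -> phi (tact s F) = pact s (phi F)].

(* V_lambda (lambda = shape of t): span of all submodules of V isomorphic to
   the Specht module of shape lambda. *)
Definition in_isotypic (R : nzRingType) n d (t : tableau n) (f : sqpoly R n) : Prop :=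
  exists (k : nat) (phi : 'I_k -> tabspace R n -> sqpoly R n) (F : 'I_k -> tabspace R n),
    (forall i, specht_embedding d t (phi i) /\ in_specht t (F i)) /\
    f = \sum_(i < k) phi i (F i).

Definition in_W (R : nzRingType) n d (t : tableau n) (f : sqpoly R n) : Prop :=
  in_isotypic d t f /\ forall s, s \in row_group t -> pact s f = f.

Definition in_hook_span (R : fieldType) n d (t : tableau n) (f : sqpoly R n) : Prop :=
  exists c : mono n -> R,
    f = \sum_(m : mono n | sqfree_mono m && (#|m| <= d)%N)
          c m *: sym (hook t) (xmono R m).

From HB Require Import structures.
From mathcomp Require Import all_boot all_order all_algebra all_fingroup.
From mathcomp Require Import reals.
Set Implicit Arguments. Unset Strict Implicit. Unset Printing Implicit Defensive.
Import GRing.Theory Num.Theory.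
Local Open Scope ring_scope.

(* Every element of V_lambda lies in V and W_tau is fixed by the row group of
   tau, which contains the row group of hook(tau) (the tail of the hook is a
   single column, hence the tail rows are singletons).  So f in W_tau is fixed
   by R_hook(tau), whence f = sym_hook(tau) f; expanding f in the monomial basis
   of V and using the linearity of sym gives the claim. *)

Section HookRowGroup.
Variables (n : nat) (t : tableau n).

Definition tail_rank (x : 'I_n) : nat :=
  #|[set y | ((t y).1 != 0%N) && (y < x)%N]|.

Lemma hook_row x :
  (hook t x).1 = if (t x).1 == 0%N then 0%N else (tail_rank x).+1.
Proof. by rewrite ffunE; case: ifP. Qed.

Lemma tail_rank_lt (x y : 'I_n) :
  (t x).1 != 0%N -> (x < y)%N -> (tail_rank x < tail_rank y)%N.
Proof.
move=> tx xy; apply: proper_card; apply/properP; split.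
  by apply/subsetP => z; rewrite !inE => /andP[-> /ltn_trans]; apply.
by exists x; rewrite !inE ?tx ?xy ?ltnn.
Qed.

Lemma tail_rank_inj (x y : 'I_n) :
  (t x).1 != 0%N -> (t y).1 != 0%N -> tail_rank x = tail_rank y -> x = y.
Proof.
move=> tx ty eq_rk; apply: val_inj.
by case: (ltngtP x y) => // [/(tail_rank_lt tx)|/(tail_rank_lt ty)];
  rewrite eq_rk ltnn.
Qed.

Lemma row_group_hook_sub : row_group (hook t) \subset row_group t.
Proof.
apply/subsetP => s; rewrite !inE => /forallP hs; apply/forallP => x.
move: (hs x); rewrite !hook_row.
case: ifP => [/eqP->|sx]; case: ifP => [/eqP->|tx] //= /eqP[eq_rk].
by rewrite (tail_rank_inj (negbT sx) (negbT tx) eq_rk).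
Qed.

End HookRowGroup.

Lemma inV_sum (R : nzRingType) n d (I : Type) (r : seq I) (P : pred I)
    (F : I -> sqpoly R n) :
  (forall i, P i -> inV d (F i)) -> inV d (\sum_(i <- r | P i) F i).
Proof.
move=> FV; apply: big_ind => // [m|f g hf hg m]; first by rewrite ffunE eqxx.
rewrite ffunE; have [/eqP f0|/hf //] := boolP (f m == 0).
by rewrite f0 add0r; apply: hg.
Qed.

Lemma in_W_inV (R : nzRingType) n d (t : tableau n) (f : sqpoly R n) :
  in_W d t f -> inV d f.
Proof.
move=> [[k [phi [F [embF ->]]]] _]; apply: inV_sum => i _.
by have [[_ phiV _ _] /phiV] := embF i.
Qed.

Lemma scale_regE (R : nzRingType) (a b : R^o) : a *: b = a * b.
Proof. by []. Qed.

Lemma sqpoly_expand (R : nzRingType) n d (f : sqpoly R n) : inV d f ->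
  f = \sum_(m : mono n | sqfree_mono m && (#|m| <= d)%N) f m *: xmono R m.
Proof.
move=> fV; apply/ffunP => m; rewrite sum_ffunE.
under eq_bigr do
  rewrite !ffunE scale_regE mulrb eq_sym (fun_if (GRing.mul _)) mulr1 mulr0.
rewrite -big_mkcondr /=.
have [Pm|nPm] := boolP (sqfree_mono m && (#|m| <= d)%N).
  by rewrite (big_pred1 m) // => m' /=; case: eqP => [->|_]; rewrite ?Pm ?andbF.
rewrite big_pred0 => [|m' /=]; last by case: eqP => [->|]; rewrite ?(negbTE nPm) ?andbF.
by apply/eqP; apply: contraNT nPm => /fV.
Qed.

Section Symmetrization.
Variables (R : numFieldType) (n : nat) (t : tableau n).

Lemma symE (f : sqpoly R n) m : sym t f m =
  (#|row_group t|%:R)^-1 * \sum_(s in row_group t) f (mono_act s^-1 m).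
Proof. by rewrite ffunE sum_ffunE; under eq_bigr do rewrite ffunE. Qed.

Lemma sym_sum (I : Type) (r : seq I) (P : pred I) (c : I -> R) F :
  sym t (\sum_(i <- r | P i) c i *: F i) = \sum_(i <- r | P i) c i *: sym t (F i).
Proof.
apply/ffunP => m; rewrite symE sum_ffunE.
under eq_bigr do rewrite sum_ffunE.
rewrite exchange_big mulr_sumr; apply: eq_bigr => i _.
rewrite [RHS]ffunE symE scale_regE mulrCA !mulr_sumr.
by apply: eq_bigr => s _; rewrite ffunE scale_regE.
Qed.

Lemma sym_fixed (f : sqpoly R n) :
  (forall s, s \in row_group t -> pact s f = f) -> sym t f = f.
Proof.
move=> fixf; apply/ffunP => m; rewrite symE.
rewrite (eq_bigr (fun=> f m)) => [|s /fixf/ffunP/(_ m)]; last by rewrite ffunE.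
have id_row : 1%g \in row_group t by rewrite inE; apply/forallP => x; rewrite perm1.
rewrite sumr_const -[f m *+ _]mulr_natl mulKf // pnatr_eq0 -lt0n.
by apply/card_gt0P; exists 1%g.
Qed.

End Symmetrization.

Theorem lemma3p2 (R : realType) (n d : nat) (lam : seq nat) (tau : tableau n) :
  (0 < n)%N -> (0 < d)%N ->
  is_partition n lam -> is_tableau lam tau ->
  forall f : sqpoly R n, in_W d tau f -> in_hook_span d tau f.
Proof.
move=> _ _ _ _ f fW; exists f.
have fixf s : s \in row_group (hook tau) -> pact s f = f.
  by move=> /(subsetP (row_group_hook_sub tau)); apply: fW.2.
by rewrite -sym_sum -sqpoly_expand ?sym_fixed //; apply: in_W_inV fW.
Qed.
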